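(* Let $a>0$, $\theta\ge 0$, $L>0$ and $\lambda\in(\tfrac12,1)$ be given. Assume that the feedback parameter $k$ satisfies $$k\ge \max\Big\{1,\ \tfrac43\Big(\tfrac1a+\tfrac1{a^2}\Big),\ \tfrac{1}{\lambda a}\Big\}.$$ Define $$\mu=\frac{1}{4\,\mathrm{e}\,L\,k},\qquad C_0=12k+4(k+1)\Big(18+13\theta+\tfrac{1}{a^2}(8+6\theta)\Big)+10,$$ $$M_1=\min\Big\{\tfrac34 k a^2-a-1,\ k-1\Big\},\qquad K_1=\frac{1+2L^2}{M_1}.$$ Let $\bar u\in C^1([0,L])$ with $\bar u(x)>0$ be a stationary state, i.e. a solution of $\bar u_x=\frac{\theta}{2}\,\frac{|\bar u|\,\bar u^2}{a^2-\bar u^2}$, and assume that for all $x\in[0,L]$ $$\bar u(x)\le \min\Big\{1,\ \tfrac{1}{4k\mathrm{e}},\ (1-\lambda)\tfrac a2,\ \tfrac{\mu}{C_0K_1}\Big\},\qquad \bar u_x(x)\le \min\Big\{1,\ \tfrac{\mu}{C_0K_1}\Big\}.$$ Let $T_{period}>0$ and $T>T_{period}$ be given, and let $\omega$ be fixed with $b(\cdot,\omega)\in C^2([0,T])$. Let $u\in C^2([0,T]\times[0,L])$ be a solution of the system $$\begin{cases} u(0,x)=\varphi(x),\quad u_t(0,x)=\psi(x), & x\in[0,L],\\ u_{tt}+2(\bar u+u)u_{tx}-\big(a^2-(\bar u+u)^2\big)u_{xx}=F(x,u,u_x,u_t) & \text{on }[0,T]\times[0,L],\\ u_x(t,0)=k\,u_t(t,0),\quad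 u(t,L)=b(t,\omega), & t\in[0,T],\end{cases}$$ (with $C^2$ initial data $\varphi\in C^2([0,L])$, $\psi\in C^1([0,L])$ compatible with the boundary conditions), where $$F=\tilde F(u+\bar u,\,u_x+\bar u_x,\,u_t)-\frac{a^2-(\bar u+u)^2}{a^2-\bar u^2}\,\tilde F(\bar u,\bar u_x,0),$$ $$\tilde F(v,v_x,v_t)=-2v_tv_x-2v\,v_x^2-\tfrac32\theta\, v|v|\,v_x-\theta|v|\,v_t,$$ and assume this solution satisfies on $[0,T]\times[0,L]$ $$|u|\le\min\Big\{\bar u(0),\ (1-\lambda)\tfrac a2,\ \tfrac{1}{4k\mathrm{e}}\Big\},\qquad \max\{|u|,|u_x|,|u_t|\}\le\min\Big\{1,\ \tfrac{\mu}{C_0K_1}\Big\}.$$ Assume that there exist $\nu>\mu$ and $C_\nu>0$ such that for all $t\in(T_{period},T)$ $$\int_{t-T_{period}}^t |b(\tau,\omega)|^2+|b_t(\tau,\omega)|^2\,d\tau\le C_\nu\exp(-\nu t),$$ and set $\delta=\nu-\mu>0$ and $C_g=\Big(\tfrac43\mathrm{e}\,a^2k^2+\tfrac{1}{2\mathrm{e}K_1k}\Big)C_\nu$. Define $$E_1(t)=\int_0^L k\Big[\big(a^2-(\bar u+u)^2\big)u_x^2+u_t^2\Big]-2\exp\Big(-\tfrac xL\Big)\Big[(\bar u+u)u_x^2+u_tu_x\Big]dx,\qquad E(t)=\int_{t-T_{period}}^tE_1(\tau)\,d\tau .$$ Then for all $t\in(T_{period},T)$ $$E(t)\le \exp\big(-\mu(t-T_{period})\big)\Big[E(T_{period})+\frac{C_g}{\delta}\Big].$$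 Moreover, if $b(t,\omega)=0$ for all $t\ge T-T_{period}$, then $$\|u\|^2_{H^1((T-T_{period},T)\times(0,L))}\le K_1\exp\big(-\mu(T-T_{period})\big)\Big[E(T_{period})+\frac{C_g}{\delta}\Big].$$
   Context: The system models subsonic isothermal gas flow in a pipe of length $L$: $u=\tilde u-\bar u$ is the deviation of the gas velocity $\tilde u$ from a stationary velocity profile $\bar u$, $a>0$ is the speed of sound, $\theta\ge0$ a friction coefficient, $k>0$ the feedback parameter of the Neumann feedback at $x=0$, and $b(t,\omega)$ models uncertain customer behavior at $x=L$ depending on an uncertain parameter $\omega$. $\mathrm{e}$ denotes Euler's number. *)

From Stdlib Require Import Reals.
From Coquelicot Require Import Coquelicot.
Open Scope R_scope.

Definition pt (u : R -> R -> R) (t x : R) : R := Derive (fun s => u s x) t.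
Definition px (u : R -> R -> R) (t x : R) : R := Derive (fun y => u t y) x.

Definition cont2 (f : R -> R -> R) (t x : R) : Prop :=
  continuous (fun p : R * R => f (fst p) (snd p)) (t, x).

Definition C2_2d (u : R -> R -> R) : Prop :=
  forall t x,
    ex_derive (fun s => u s x) t /\ ex_derive (fun y => u t y) x /\
    ex_derive (fun s => pt u s x) t /\ ex_derive (fun y => pt u t y) x /\
    ex_derive (fun s => px u s x) t /\ ex_derive (fun y => px u t y) x /\
    cont2 u t x /\ cont2 (pt u) t x /\ cont2 (px u) t x /\
    cont2 (pt (pt u)) t x /\ cont2 (px (pt u)) t x /\
    cont2 (pt (px u)) t x /\ cont2 (px (px u)) t x.

Definition C1_1d (f : R -> R) : Prop :=
  forall x, ex_derive f x /\ continuous (Derive f) x.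
Definition C2_1d (f : R -> R) : Prop :=
  forall x, ex_derive f x /\ ex_derive (Derive f) x /\
            continuous (Derive (Derive f)) x.

Definition Ftilde (theta v vx vt : R) : R :=
  - 2 * vt * vx - 2 * v * vx ^ 2 - 3 / 2 * theta * v * Rabs v * vx
  - theta * Rabs v * vt.

Definition E1 (a k L : R) (ubar : R -> R) (u : R -> R -> R) (t : R) : R :=
  RInt (fun x =>
    k * ((a ^ 2 - (ubar x + u t x) ^ 2) * (px u t x) ^ 2 + (pt u t x) ^ 2)
    - 2 * exp (- (x / L)) * ((ubar x + u t x) * (px u t x) ^ 2
                              + pt u t x * px u t x)) 0 L.

Definition Eint (a k L Tp : R) (ubar : R -> R) (u : R -> R -> R) (t : R) : R :=
  RInt (fun tau => E1 a k L ubar u tau) (t - Tp) t.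

(* squared H^1 norm on (t0,t1) x (0,L), written out for a C^1 function *)
Definition H1sq (u : R -> R -> R) (t0 t1 L : R) : R :=
  RInt (fun t => RInt (fun x => (u t x) ^ 2 + (pt u t x) ^ 2 + (px u t x) ^ 2) 0 L)
       t0 t1.

From Stdlib Require Import Reals Lra Psatz.
From Coquelicot Require Import Coquelicot.
Open Scope R_scope.

(* Write w = ubar + u, P = u_x, Q = u_t.  Along solutions the weighted
   density e = k ((a^2 - w^2) P^2 + Q^2) - 2 exp(-x/L) (w P^2 + Q P) satisfies
   e_t = H_x + R for a flux H, and the derivative -exp(-x/L)/L of the weight makes
   R <= -mu e + (mu/K1) (u^2 - 2 L^2 P^2) as soon as ubar, u and their derivatives are small:
   the cubic terms and the source F are then O(eta) (P^2 + Q^2 + u^2).  Integrating in x,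
   the Poincare inequality  int u^2 <= 2 L b^2 + 2 L^2 int P^2  absorbs the u^2 term, the
   feedback u_x = k u_t makes H(t,0) >= 0, and H(t,L) <= e (k a b_t)^2; hence
   E1' <= -mu E1 + C (b^2 + b_t^2).  On windows of length Tp this gives
   E' <= -mu E + C Cnu exp(-nu t), and a Gronwall argument yields the decay.  Finally
   E1 >= M1 int (P^2 + Q^2), so Poincare with u(t,L) = 0 bounds the H^1 norm by K1 E1. *)

Lemma Rabs_mult_le x y X Y : Rabs x <= X -> Rabs y <= Y -> Rabs (x * y) <= X * Y.
Proof. intros. rewrite Rabs_mult. apply Rmult_le_compat; auto using Rabs_pos. Qed.

Lemma Rabs_plus_le x y X Y : Rabs x <= X -> Rabs y <= Y -> Rabs (x + y) <= X + Y.
Proof. intros. eapply Rle_trans; [apply Rabs_triang | lra]. Qed.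

Lemma Rabs_minus_le x y X Y : Rabs x <= X -> Rabs y <= Y -> Rabs (x - y) <= X + Y.
Proof. intros. eapply Rle_trans; [apply Rabs_triang | rewrite Rabs_Ropp; lra]. Qed.

Lemma two_Rabs_mult_le x y : 2 * Rabs (x * y) <= x ^ 2 + y ^ 2.
Proof.
rewrite Rabs_mult, <- (pow2_abs x), <- (pow2_abs y). pose proof (pow2_ge_0 (Rabs x - Rabs y)). lra.
Qed.

Lemma pow2_le_of_Rabs_le x c : Rabs x <= c -> x ^ 2 <= c ^ 2.
Proof. intros h. rewrite <- pow2_abs. pose proof (Rabs_pos x). nra. Qed.

Lemma Rabs_nonneg_plus_le x y c : 0 <= x <= c -> Rabs y <= c -> Rabs (x + y) <= 2 * c.
Proof. intros. replace (2 * c) with (c + c) by ring. apply Rabs_plus_le; [rewrite Rabs_pos_eq|]; lra. Qed.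

Lemma Rabs_mul_Rabs_sub x y :
  Rabs (x * Rabs x - y * Rabs y) <= Rabs (x - y) * (Rabs x + Rabs y).
Proof. unfold Rabs; repeat destruct Rcase_abs; nra. Qed.

(** * The source term *)

Definition source (theta a ub s u P Q : R) : R :=
  Ftilde theta (u + ub) (P + s) Q
  - (a ^ 2 - (ub + u) ^ 2) / (a ^ 2 - ub ^ 2) * Ftilde theta ub s 0.

Definition source_const (a theta : R) : R := 18 + 13 * theta + 1 / a ^ 2 * (8 + 6 * theta).

Lemma source_decomposition theta a ub s u P Q :
  a ^ 2 - ub ^ 2 <> 0 ->
  let w := ub + u in
  source theta a ub s u P Q =
    Q * (- 2 * (P + s) - theta * Rabs w)
  + P * (- 2 * w * (P + 2 * s) - 3 / 2 * theta * w * Rabs w)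
  + u * (- 2 * s ^ 2 - (w + ub) / (a ^ 2 - ub ^ 2) * (2 * ub * s ^ 2 + 3 / 2 * theta * ub * Rabs ub * s))
  - 3 / 2 * theta * s * (w * Rabs w - ub * Rabs ub).
Proof.
intros hA w. unfold source, Ftilde, w. replace (u + ub) with (ub + u) by ring.
field. exact hA.
Qed.

Section Source_bound.

Variables (theta a eta ub s u P Q : R).
Hypothesis ha : 0 < a.
Hypothesis ht : 0 <= theta.
Hypothesis he : 0 < eta <= 1.
Hypothesis hub : 0 <= ub <= eta.
Hypothesis hub2 : 2 * ub <= a.
Hypothesis hu : Rabs u <= eta.
Hypothesis hs : Rabs s <= eta.
Hypothesis hP : Rabs P <= eta.

Lemma source_Q_coeff_bound :
  Rabs (- 2 * (P + s) - theta * Rabs (ub + u)) <= (4 + 2 * theta) * eta.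
Proof.
pose proof (Rabs_nonneg_plus_le ub u eta hub hu).
replace ((4 + 2 * theta) * eta) with (2 * (eta + eta) + theta * (2 * eta)) by ring.
apply Rabs_minus_le.
- apply Rabs_mult_le; [rewrite Rabs_left; lra | apply Rabs_plus_le; lra].
- apply Rabs_mult_le; [rewrite Rabs_pos_eq; lra | rewrite Rabs_Rabsolu; lra].
Qed.

Lemma source_P_coeff_bound :
  Rabs (- 2 * (ub + u) * (P + 2 * s) - 3 / 2 * theta * (ub + u) * Rabs (ub + u))
  <= (12 + 6 * theta) * eta.
Proof.
pose proof (Rabs_nonneg_plus_le ub u eta hub hu).
assert (hP2 : Rabs (P + 2 * s) <= 3 * eta).
{ replace (3 * eta) with (eta + 2 * eta) by ring. apply Rabs_plus_le; [lra|].
  rewrite Rabs_mult, Rabs_pos_eq; lra. }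
assert (eta * eta <= eta) by nra.
assert (theta * (eta * eta) <= theta * eta) by (apply Rmult_le_compat_l; lra).
apply Rle_trans with (2 * (2 * eta) * (3 * eta) + 3 / 2 * theta * (2 * eta) * (2 * eta)); [|nra].
apply Rabs_minus_le.
- apply Rabs_mult_le; [|lra]. apply Rabs_mult_le; [rewrite Rabs_left; lra | lra].
- apply Rabs_mult_le; [|rewrite Rabs_Rabsolu; lra].
  apply Rabs_mult_le; [rewrite Rabs_pos_eq; nra | lra].
Qed.

Lemma source_u_coeff_bound :
  Rabs (- 2 * s ^ 2 - (ub + u + ub) / (a ^ 2 - ub ^ 2)
                      * (2 * ub * s ^ 2 + 3 / 2 * theta * ub * Rabs ub * s))
  <= (2 + 1 / a ^ 2 * (8 + 6 * theta)) * eta.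
Proof.
pose proof (Rabs_nonneg_plus_le ub u eta hub hu).
set (d := 1 / a ^ 2 * (8 + 6 * theta)).
assert (hd : 0 <= d) by (unfold d; apply Rmult_le_pos; [apply Rlt_le, Rdiv_lt_0_compat; nra | lra]).
assert (hee : eta * eta <= eta) by nra.
assert (hA0inv : / (a ^ 2 - ub ^ 2) <= 4 / 3 * / a ^ 2).
{ replace (4 / 3 * / a ^ 2) with (/ (3 / 4 * a ^ 2)) by (field; lra).
  apply Rinv_le_contravar; nra. }
assert (hs2 : Rabs (s ^ 2) <= eta)
  by (rewrite <- Rsqr_pow2; apply Rle_trans with (eta * eta); [apply Rabs_mult_le|]; lra).
assert (hr : Rabs ((ub + u + ub) / (a ^ 2 - ub ^ 2)) <= 3 * eta * (4 / 3 * / a ^ 2)).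
{ apply Rabs_mult_le.
  - replace (3 * eta) with (2 * eta + eta) by ring. apply Rabs_plus_le; [|rewrite Rabs_pos_eq]; lra.
  - rewrite Rabs_inv, Rabs_pos_eq by nra. exact hA0inv. }
assert (hq : Rabs (2 * ub * s ^ 2 + 3 / 2 * theta * ub * Rabs ub * s) <= (2 + 3 / 2 * theta) * eta).
{ assert (Rabs ub <= eta) by (rewrite Rabs_pos_eq; lra).
  assert (theta * (eta * eta) <= theta * eta) by (apply Rmult_le_compat_l; lra).
  apply Rle_trans with (2 * eta * eta + 3 / 2 * theta * eta * eta * eta); [|nra].
  apply Rabs_plus_le.
  - apply Rabs_mult_le; [|lra]. apply Rabs_mult_le; [rewrite Rabs_pos_eq; lra | lra].
  - apply Rabs_mult_le; [|lra]. apply Rabs_mult_le; [|rewrite Rabs_Rabsolu; lra].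
    apply Rabs_mult_le; [rewrite Rabs_pos_eq; nra | lra]. }
assert (hrq := Rabs_mult_le _ _ _ _ hr hq).
assert (3 * eta * (4 / 3 * / a ^ 2) * ((2 + 3 / 2 * theta) * eta) = d * (eta * eta))
  by (unfold d; field; lra).
assert (d * (eta * eta) <= d * eta) by (apply Rmult_le_compat_l; lra).
apply Rle_trans with (2 * eta + d * eta); [|lra].
apply Rabs_minus_le; [|lra].
rewrite Rabs_mult, Rabs_left by lra. lra.
Qed.

Lemma source_sign_term_bound :
  Rabs (3 / 2 * theta * s * ((ub + u) * Rabs (ub + u) - ub * Rabs ub))
  <= 9 / 2 * theta * eta * Rabs u.
Proof.
pose proof (Rabs_nonneg_plus_le ub u eta hub hu).
assert (hdiff : Rabs ((ub + u) * Rabs (ub + u) - ub * Rabs ub) <= Rabs u * (3 * eta)).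
{ eapply Rle_trans; [apply Rabs_mul_Rabs_sub|].
  replace (ub + u - ub) with u by ring.
  apply Rmult_le_compat_l; [apply Rabs_pos | rewrite (Rabs_pos_eq ub); lra]. }
apply Rle_trans with (3 / 2 * theta * eta * (Rabs u * (3 * eta))).
- apply Rabs_mult_le; [|exact hdiff]. apply Rabs_mult_le; [rewrite Rabs_pos_eq; lra | lra].
- pose proof (Rabs_pos u). assert (eta * eta <= eta) by nra.
  assert (0 <= theta * Rabs u) by (apply Rmult_le_pos; lra).
  nra.
Qed.

Lemma source_bound :
  Rabs (source theta a ub s u P Q) <= source_const a theta * eta * (Rabs P + Rabs Q + Rabs u).
Proof.
pose proof source_Q_coeff_bound. pose proof source_P_coeff_bound.
pose proof source_u_coeff_bound. pose proof source_sign_term_bound.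
rewrite source_decomposition by nra.
set (d := 1 / a ^ 2 * (8 + 6 * theta)) in *.
assert (hd : 0 <= d) by (unfold d; apply Rmult_le_pos; [apply Rlt_le, Rdiv_lt_0_compat; nra | lra]).
pose proof (Rabs_pos P). pose proof (Rabs_pos Q). pose proof (Rabs_pos u).
eapply Rle_trans.
{ apply Rabs_minus_le; [apply Rabs_plus_le; [apply Rabs_plus_le|]|];
    [rewrite Rabs_mult; apply Rle_refl ..|].
  eassumption. }
apply Rle_trans with (Rabs Q * ((4 + 2 * theta) * eta) + Rabs P * ((12 + 6 * theta) * eta)
                      + Rabs u * ((2 + d) * eta) + 9 / 2 * theta * eta * Rabs u).
- apply Rplus_le_compat; [apply Rplus_le_compat; [apply Rplus_le_compat|]|];
    try apply Rle_refl; apply Rmult_le_compat_l; auto using Rabs_pos.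
- unfold source_const. fold d.
  assert (0 <= eta * Rabs P) by nra. assert (0 <= eta * Rabs Q) by nra.
  assert (0 <= eta * Rabs u) by nra.
  assert (0 <= theta * (eta * Rabs P)) by nra. assert (0 <= theta * (eta * Rabs Q)) by nra.
  assert (0 <= theta * (eta * Rabs u)) by nra.
  assert (0 <= d * (eta * Rabs P)) by nra. assert (0 <= d * (eta * Rabs Q)) by nra.
  nra.
Qed.

End Source_bound.

(** * Pointwise energy estimates *)

(* Energy density and flux at a point, in terms of w = ubar + u, P = u_x, Q = u_t and the
   weight eps = exp (-x/L). *)
Definition density (a k eps w P Q : R) : R :=
  k * ((a ^ 2 - w ^ 2) * P ^ 2 + Q ^ 2) - 2 * eps * (w * P ^ 2 + Q * P).

Definition flux (a k eps w P Q : R) : R :=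
  2 * k * (a ^ 2 - w ^ 2) * P * Q - 2 * k * w * Q ^ 2 - eps * ((a ^ 2 - w ^ 2) * P ^ 2 + Q ^ 2).

Definition cubic_terms (k eps w s P Q : R) : R :=
  - 2 * k * w * Q * P ^ 2 + 4 * k * w * (s + P) * P * Q + 2 * k * (s + P) * Q ^ 2
  - 2 * eps * Q * P ^ 2 - 2 * eps * w * (s + P) * P ^ 2.

Definition remainder (a k L eps w s P Q F : R) : R :=
  cubic_terms k eps w s P Q + 2 * (k * Q - eps * P) * F
  - eps / L * ((a ^ 2 - w ^ 2) * P ^ 2 + Q ^ 2).

(* mu, M1, K1, C0 and min {1, mu / (C0 K1)} of the statement. *)
Definition decay_rate (L k : R) : R := 1 / (4 * exp 1 * L * k).
Definition coercivity (a k : R) : R := Rmin (3 / 4 * k * a ^ 2 - a - 1) (k - 1).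
Definition energy_H1_const (a k L : R) : R := (1 + 2 * L ^ 2) / coercivity a k.
Definition error_const (a theta k : R) : R := 12 * k + 4 * (k + 1) * source_const a theta + 10.
Definition small_const (a theta L k : R) : R :=
  Rmin 1 (decay_rate L k / (error_const a theta k * energy_H1_const a k L)).

Lemma quadratic_form_le al be ga A B G P Q :
  Rabs al <= A -> Rabs be <= B -> Rabs ga <= G ->
  al * P ^ 2 + be * (P * Q) + ga * Q ^ 2 <= (A + B / 2) * P ^ 2 + (B / 2 + G) * Q ^ 2.
Proof.
intros hA hB hG.
assert (hPQ := two_Rabs_mult_le P Q).
assert (al * P ^ 2 <= A * P ^ 2).
{ apply Rmult_le_compat_r; [apply pow2_ge_0 | eapply Rle_trans; [apply Rle_abs | exact hA]]. }
assert (be * (P * Q) <= B * Rabs (P * Q)).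
{ eapply Rle_trans; [apply Rle_abs|]. rewrite Rabs_mult.
  apply Rmult_le_compat_r; [apply Rabs_pos | exact hB]. }
assert (ga * Q ^ 2 <= G * Q ^ 2).
{ apply Rmult_le_compat_r; [apply pow2_ge_0 | eapply Rle_trans; [apply Rle_abs | exact hG]]. }
assert (0 <= B) by (eapply Rle_trans; [apply Rabs_pos | exact hB]).
nra.
Qed.

Lemma cubic_terms_bound k eps eta w s P Q :
  0 <= k -> 0 < eps <= 1 -> 0 < eta <= 1 -> Rabs w <= 2 * eta ->
  Rabs s <= eta -> Rabs P <= eta -> Rabs Q <= eta ->
  cubic_terms k eps w s P Q <= (12 * k + 10) * eta * (P ^ 2 + Q ^ 2).
Proof.
intros hk heps he hw hs hP hQ.
assert (hee : eta * eta <= eta) by nra.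
assert (hsP : Rabs (s + P) <= 2 * eta)
  by (replace (2 * eta) with (eta + eta) by ring; apply Rabs_plus_le; lra).
assert (hk' : Rabs k = k) by (apply Rabs_pos_eq; lra).
assert (heps' : Rabs eps = eps) by (apply Rabs_pos_eq; lra).
replace (cubic_terms k eps w s P Q) with
  ((- 2 * k * w * Q - 2 * eps * Q - 2 * eps * w * (s + P)) * P ^ 2
   + (4 * k * w * (s + P)) * (P * Q) + (2 * k * (s + P)) * Q ^ 2)
  by (unfold cubic_terms; ring).
eapply Rle_trans.
- apply (quadratic_form_le _ _ _ ((4 * k + 10) * eta) (16 * k * eta) (4 * k * eta)).
  + apply Rle_trans with
      (2 * k * (2 * eta) * eta + 2 * eps * eta + 2 * eps * (2 * eta) * (2 * eta)); [|nra].
    apply Rabs_minus_le; [apply Rabs_minus_le|];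
      repeat apply Rabs_mult_le; rewrite ?Rabs_left, ?Rabs_pos_eq by lra; lra.
  + apply Rle_trans with (4 * k * (2 * eta) * (2 * eta)); [|nra].
    repeat apply Rabs_mult_le; rewrite ?Rabs_pos_eq by lra; lra.
  + replace (4 * k * eta) with (2 * k * (2 * eta)) by ring.
    repeat apply Rabs_mult_le; rewrite ?Rabs_pos_eq by lra; lra.
- pose proof (pow2_ge_0 P). pose proof (pow2_ge_0 Q). nra.
Qed.

Lemma mixed_product_le k p q v :
  1 <= k -> 0 <= p -> 0 <= q -> 0 <= v ->
  2 * (k * q + p) * (p + q + v) <= 4 * (k + 1) * (p ^ 2 + q ^ 2 + v ^ 2).
Proof.
intros hk hp hq hv.
pose proof (pow2_ge_0 (p - q)). pose proof (pow2_ge_0 (q - v)). pose proof (pow2_ge_0 (p - v)).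
assert (0 <= (k - 1) * (p - q) ^ 2) by (apply Rmult_le_pos; lra).
assert (0 <= (k - 1) * (q - v) ^ 2) by (apply Rmult_le_pos; lra).
assert (0 <= (k - 1) * p ^ 2) by (apply Rmult_le_pos; nra).
assert (0 <= (k - 1) * v ^ 2) by (apply Rmult_le_pos; nra).
nra.
Qed.

Lemma source_term_bound k eps c eta P Q u F :
  1 <= k -> 0 < eps <= 1 -> 0 <= c -> 0 <= eta ->
  Rabs F <= c * eta * (Rabs P + Rabs Q + Rabs u) ->
  2 * (k * Q - eps * P) * F <= 4 * (k + 1) * c * eta * (P ^ 2 + Q ^ 2 + u ^ 2).
Proof.
intros hk heps hc he hF.
assert (hkQ : Rabs (k * Q - eps * P) <= k * Rabs Q + Rabs P).
{ apply Rabs_minus_le; rewrite Rabs_mult, Rabs_pos_eq by lra; [lra|].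
  pose proof (Rabs_pos P). nra. }
assert (hm := mixed_product_le k (Rabs P) (Rabs Q) (Rabs u) hk (Rabs_pos _) (Rabs_pos _) (Rabs_pos _)).
rewrite !pow2_abs in hm.
apply Rle_trans with (2 * ((k * Rabs Q + Rabs P) * (c * eta * (Rabs P + Rabs Q + Rabs u)))).
- rewrite Rmult_assoc. apply Rmult_le_compat_l; [lra|].
  eapply Rle_trans; [apply Rle_abs|]. apply Rabs_mult_le; assumption.
- assert (0 <= c * eta) by (apply Rmult_le_pos; lra).
  replace (4 * (k + 1) * c * eta * (P ^ 2 + Q ^ 2 + u ^ 2))
    with (c * eta * (4 * (k + 1) * (P ^ 2 + Q ^ 2 + u ^ 2))) by ring.
  replace (2 * ((k * Rabs Q + Rabs P) * (c * eta * (Rabs P + Rabs Q + Rabs u))))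
    with (c * eta * (2 * (k * Rabs Q + Rabs P) * (Rabs P + Rabs Q + Rabs u))) by ring.
  apply Rmult_le_compat_l; assumption.
Qed.

Lemma cross_term_bound a eps w P Q :
  0 <= eps <= 1 -> Rabs w <= a / 2 ->
  Rabs (2 * eps * (w * P ^ 2 + Q * P)) <= (a + 1) * P ^ 2 + Q ^ 2.
Proof.
intros heps hw.
assert (hPQ := two_Rabs_mult_le Q P).
assert (hwP : Rabs (w * P ^ 2) <= a / 2 * P ^ 2).
{ rewrite Rabs_mult, (Rabs_pos_eq (P ^ 2)) by apply pow2_ge_0.
  apply Rmult_le_compat_r; [apply pow2_ge_0 | exact hw]. }
rewrite Rabs_mult, (Rabs_pos_eq (2 * eps)) by lra.
assert (Rabs (w * P ^ 2 + Q * P) <= a / 2 * P ^ 2 + Rabs (Q * P)) by (apply Rabs_plus_le; lra).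
pose proof (Rabs_pos (w * P ^ 2 + Q * P)).
apply Rle_trans with (2 * (a / 2 * P ^ 2 + Rabs (Q * P))); [nra | lra].
Qed.

Lemma coercivity_le_quadratic a k P Q :
  coercivity a k * (P ^ 2 + Q ^ 2) <= (3 / 4 * k * a ^ 2 - a - 1) * P ^ 2 + (k - 1) * Q ^ 2.
Proof.
pose proof (pow2_ge_0 P). pose proof (pow2_ge_0 Q).
assert (coercivity a k * P ^ 2 <= (3 / 4 * k * a ^ 2 - a - 1) * P ^ 2)
  by (apply Rmult_le_compat_r; [lra | apply Rmin_l]).
assert (coercivity a k * Q ^ 2 <= (k - 1) * Q ^ 2)
  by (apply Rmult_le_compat_r; [lra | apply Rmin_r]).
lra.
Qed.

Lemma density_ge a k eps w P Q :
  0 < a -> 0 <= k -> 0 <= eps <= 1 -> Rabs w <= a / 2 ->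
  coercivity a k * (P ^ 2 + Q ^ 2) <= density a k eps w P Q.
Proof.
intros ha hk heps hw.
assert (hc := cross_term_bound a eps w P Q heps hw).
assert (hw2 := pow2_le_of_Rabs_le w (a / 2) hw).
pose proof (coercivity_le_quadratic a k P Q).
assert (0 <= k * (((a / 2) ^ 2 - w ^ 2) * P ^ 2))
  by (apply Rmult_le_pos; [|apply Rmult_le_pos, pow2_ge_0]; lra).
unfold density. pose proof (Rle_abs (2 * eps * (w * P ^ 2 + Q * P))).
nra.
Qed.

Lemma density_le a k eps w P Q :
  0 <= eps <= 1 -> Rabs w <= a / 2 ->
  density a k eps w P Q <= k * ((a ^ 2 - w ^ 2) * P ^ 2 + Q ^ 2) + (a + 1) * P ^ 2 + Q ^ 2.
Proof.
intros heps hw. assert (hc := cross_term_bound a eps w P Q heps hw).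
unfold density. pose proof (Rle_abs (- (2 * eps * (w * P ^ 2 + Q * P)))).
rewrite Rabs_Ropp in *. lra.
Qed.

Lemma decay_rate_pos L k : 0 < L -> 0 < k -> 0 < decay_rate L k.
Proof.
intros hL hk. unfold decay_rate. pose proof (exp_pos 1).
apply Rdiv_lt_0_compat; [lra|]. repeat apply Rmult_lt_0_compat; lra.
Qed.

Lemma weight_dissipation a k L eps w P Q :
  0 < a -> 0 < L -> 0 < k -> / exp 1 <= eps <= 1 -> Rabs w <= a / 2 ->
  - (eps / L) * ((a ^ 2 - w ^ 2) * P ^ 2 + Q ^ 2)
  + decay_rate L k * (density a k eps w P Q + coercivity a k * (P ^ 2 + Q ^ 2)) <= 0.
Proof.
intros ha hL hk heps hw.
pose proof (exp_pos 1) as he. pose proof (decay_rate_pos L k hL hk) as hmu.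
assert (hrate : 4 * k * decay_rate L k <= eps / L).
{ replace (4 * k * decay_rate L k) with (/ exp 1 / L) by (unfold decay_rate; field; lra).
  apply Rmult_le_compat_r; [apply Rlt_le, Rinv_0_lt_compat |]; lra. }
assert (hw2 := pow2_le_of_Rabs_le w (a / 2) hw).
pose proof (pow2_ge_0 P). pose proof (pow2_ge_0 Q).
set (X := (a ^ 2 - w ^ 2) * P ^ 2 + Q ^ 2).
assert (hX : 3 / 4 * a ^ 2 * P ^ 2 + Q ^ 2 <= X) by (unfold X; nra).
assert (heps0 : 0 <= eps <= 1) by (pose proof (Rinv_0_lt_compat _ he); lra).
assert (hd := density_le a k eps w P Q heps0 hw). fold X in hd.
pose proof (coercivity_le_quadratic a k P Q).
assert (k * (3 / 4 * a ^ 2 * P ^ 2 + Q ^ 2) <= k * X) by (apply Rmult_le_compat_l; lra).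
assert (hbr : density a k eps w P Q + coercivity a k * (P ^ 2 + Q ^ 2) <= 2 * k * X) by nra.
assert (0 <= X) by nra.
assert (- (eps / L) * X <= - (4 * k * decay_rate L k) * X) by nra.
assert (decay_rate L k * (density a k eps w P Q + coercivity a k * (P ^ 2 + Q ^ 2))
        <= decay_rate L k * (2 * k * X)) by (apply Rmult_le_compat_l; lra).
assert (0 <= k * decay_rate L k * X) by (apply Rmult_le_pos; [apply Rmult_le_pos|]; lra).
lra.
Qed.

Lemma source_const_nonneg a theta : 0 < a -> 0 <= theta -> 0 <= source_const a theta.
Proof.
intros ha ht. unfold source_const.
assert (0 <= 1 / a ^ 2 * (8 + 6 * theta))
  by (apply Rmult_le_pos; [apply Rlt_le, Rdiv_lt_0_compat; nra | lra]).
lra.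
Qed.

Lemma small_const_spec a theta L k :
  0 < a -> 0 <= theta -> 0 < L -> 1 <= k -> 0 < coercivity a k ->
  0 < small_const a theta L k <= 1 /\
  error_const a theta k * small_const a theta L k <= decay_rate L k / energy_H1_const a k L.
Proof.
intros ha ht hL hk hM.
pose proof (decay_rate_pos L k hL ltac:(lra)) as hmu.
pose proof (source_const_nonneg a theta ha ht).
assert (hC0 : 0 < error_const a theta k) by (unfold error_const; nra).
assert (hK1 : 0 < energy_H1_const a k L) by (apply Rdiv_lt_0_compat; nra).
assert (0 < decay_rate L k / (error_const a theta k * energy_H1_const a k L))
  by (apply Rdiv_lt_0_compat; nra).
unfold small_const. split.
- split; [apply Rmin_glb_lt; lra | apply Rmin_l].
- apply Rle_trans with
    (error_const a theta k * (decay_rate L k / (error_const a theta k * energy_H1_const a k L))).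
  + apply Rmult_le_compat_l; [lra | apply Rmin_r].
  + right. field. lra.
Qed.

Lemma remainder_le a theta L k eps ub s u P Q :
  0 < a -> 0 <= theta -> 0 < L -> 1 <= k -> 0 < coercivity a k -> / exp 1 <= eps <= 1 ->
  let eta := small_const a theta L k in
  0 <= ub <= eta -> 2 * ub <= a -> Rabs (ub + u) <= a / 2 ->
  Rabs u <= eta -> Rabs s <= eta -> Rabs P <= eta -> Rabs Q <= eta ->
  remainder a k L eps (ub + u) s P Q (source theta a ub s u P Q)
  <= - decay_rate L k * density a k eps (ub + u) P Q
     + decay_rate L k / energy_H1_const a k L * (u ^ 2 - 2 * L ^ 2 * P ^ 2).
Proof.
intros ha ht hL hk hM heps eta hub hub2 hw hu hs hP hQ.
destruct (small_const_spec a theta L k ha ht hL hk hM) as [he hCe].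
fold eta in he, hCe.
pose proof (exp_pos 1).
assert (heps0 : 0 < eps <= 1) by (pose proof (Rinv_0_lt_compat _ (exp_pos 1)); lra).
set (mu := decay_rate L k) in *. set (K1 := energy_H1_const a k L) in *.
assert (hw2 := Rabs_nonneg_plus_le ub u eta hub hu).
assert (hcub := cubic_terms_bound k eps eta (ub + u) s P Q ltac:(lra) heps0 he hw2 hs hP hQ).
assert (hsrc := source_term_bound k eps (source_const a theta) eta P Q u _ hk heps0
  (source_const_nonneg a theta ha ht) ltac:(lra)
  (source_bound theta a eta ub s u P Q ha ht he hub hub2 hu hs hP)).
assert (hdis := weight_dissipation a k L eps (ub + u) P Q ha hL ltac:(lra) heps hw).
fold mu in hdis.
assert (hmuK : mu / K1 * (1 + 2 * L ^ 2) = mu * coercivity a k)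
  by (unfold K1, energy_H1_const; field; split; nra).
assert (hmuK' : mu / K1 <= mu * coercivity a k).
{ assert (0 < mu / K1) by (apply Rdiv_lt_0_compat; [apply decay_rate_pos | apply Rdiv_lt_0_compat]; nra).
  rewrite <- hmuK. pose proof (pow2_ge_0 L). nra. }
pose proof (pow2_ge_0 P). pose proof (pow2_ge_0 Q). pose proof (pow2_ge_0 u).
assert (herr : (error_const a theta k * eta) * (P ^ 2 + Q ^ 2 + u ^ 2)
               <= mu / K1 * (P ^ 2 + Q ^ 2 + u ^ 2))
  by (apply Rmult_le_compat_r; lra).
assert (mu / K1 * Q ^ 2 <= mu * coercivity a k * Q ^ 2) by (apply Rmult_le_compat_r; lra).
assert (mu / K1 * (1 + 2 * L ^ 2) * P ^ 2 = mu * coercivity a k * P ^ 2) by (rewrite hmuK; ring).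
assert (0 <= (12 * k + 10) * eta * u ^ 2) by (apply Rmult_le_pos; [apply Rmult_le_pos|]; lra).
unfold remainder, error_const in *.
lra.
Qed.

Lemma flux_inflow_nonneg a k lambda w Q :
  0 < a -> 0 < k -> 0 < lambda < 1 -> 1 <= k * (lambda * a) -> Rabs w <= (1 - lambda) * a ->
  0 <= flux a k 1 w (k * Q) Q.
Proof.
intros ha hk hl hka hw.
assert (hkw : Rabs (k * w + 1) <= k * a).
{ eapply Rle_trans; [apply Rabs_triang|]. rewrite Rabs_mult, Rabs_R1, Rabs_pos_eq by lra. nra. }
assert (0 <= (k * a) ^ 2 - (k * w + 1) ^ 2)
  by (pose proof (pow2_le_of_Rabs_le _ _ hkw); lra).
replace (flux a k 1 w (k * Q) Q) with (((k * a) ^ 2 - (k * w + 1) ^ 2) * Q ^ 2) by (unfold flux; ring).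
apply Rmult_le_pos; [lra | apply pow2_ge_0].
Qed.

Lemma flux_outflow_le a k w P Q :
  0 < k -> Rabs w <= a -> 2 * k * Rabs w <= / exp 1 ->
  flux a k (/ exp 1) w P Q <= exp 1 * (k * a * Q) ^ 2.
Proof.
intros hk hwa hw. apply pow2_le_of_Rabs_le in hwa.
pose proof (exp_pos 1) as he.
set (A := a ^ 2 - w ^ 2).
assert (hA : 0 <= A) by (unfold A; lra).
assert (hsq : 2 * k * A * P * Q - / exp 1 * A * P ^ 2 <= exp 1 * k ^ 2 * A * Q ^ 2).
{ assert (0 <= A * (P - exp 1 * k * Q) ^ 2 * / exp 1)
    by (apply Rmult_le_pos; [apply Rmult_le_pos; [lra | apply pow2_ge_0]
                            | apply Rlt_le, Rinv_0_lt_compat; lra]).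
  replace (A * (P - exp 1 * k * Q) ^ 2 * / exp 1)
    with (A * P ^ 2 * / exp 1 - 2 * k * A * P * Q + exp 1 * k ^ 2 * A * Q ^ 2) in H by (field; lra).
  lra. }
assert (hwQ : - 2 * k * w * Q ^ 2 <= / exp 1 * Q ^ 2).
{ apply Rmult_le_compat_r; [apply pow2_ge_0|].
  pose proof (Rle_abs (- w)). rewrite Rabs_Ropp in *. nra. }
assert (exp 1 * k ^ 2 * A * Q ^ 2 <= exp 1 * k ^ 2 * a ^ 2 * Q ^ 2).
{ apply Rmult_le_compat_r; [apply pow2_ge_0|]. apply Rmult_le_compat_l; [nra | unfold A; nra]. }
unfold flux. fold A. nra.
Qed.

(** * One-dimensional calculus *)

Lemma ex_RInt_cont (f : R -> R) a b : (forall x, continuous f x) -> ex_RInt f a b.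
Proof. intros H. apply (ex_RInt_continuous (V := R_CompleteNormedModule)). intros; apply H. Qed.

Lemma continuous_pow2 (f : R -> R) x : continuous f x -> continuous (fun y => f y ^ 2) x.
Proof.
intros H. apply (continuous_mult (K := R_AbsRing) f (fun y => f y ^ 1)); [exact H|].
apply (continuous_mult (K := R_AbsRing) f (fun _ => 1)); [exact H | apply continuous_const].
Qed.

Lemma RInt_sqr_le (g : R -> R) x L : x <= L -> (forall y, continuous g y) ->
  (RInt g x L) ^ 2 <= (L - x) * RInt (fun y => g y ^ 2) x L.
Proof.
intros hxL hg.
destruct (Req_dec x L) as [->|ne].
{ rewrite !RInt_point. simpl. unfold zero; simpl. lra. }
set (l := L - x). set (m := RInt g x L). set (G := RInt (fun y => g y ^ 2) x L).
assert (I1 : is_RInt g x L m) by (apply (RInt_correct (V := R_CompleteNormedModule)), ex_RInt_cont, hg).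
assert (I2 : is_RInt (fun y => g y ^ 2) x L G)
  by (apply (RInt_correct (V := R_CompleteNormedModule)), ex_RInt_cont;
      intros; apply continuous_pow2, hg).
assert (I3 : is_RInt (fun y => (l * g y - m) ^ 2) x L (l ^ 2 * G - 2 * l * m * m + l * m ^ 2)).
{ apply (is_RInt_ext (V := R_NormedModule) (fun y => l ^ 2 * g y ^ 2 + (- 2 * l * m) * g y + m ^ 2));
    [intros; simpl; ring|].
  replace (l ^ 2 * G - 2 * l * m * m + l * m ^ 2)
    with (l ^ 2 * G + (- 2 * l * m) * m + (L - x) * m ^ 2) by (unfold l; ring).
  apply (is_RInt_plus (V := R_NormedModule)); [apply (is_RInt_plus (V := R_NormedModule))|];
    try apply (is_RInt_scal (V := R_NormedModule)); try assumption.
  apply (is_RInt_const (V := R_NormedModule)). }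
assert (0 <= l ^ 2 * G - 2 * l * m * m + l * m ^ 2).
{ rewrite <- (is_RInt_unique _ _ _ _ I3).
  apply RInt_ge_0; [exact hxL | eexists; exact I3 | intros; apply pow2_ge_0]. }
assert (hl : 0 < l) by (unfold l; lra).
fold m G. apply Rmult_le_reg_l with l; [exact hl | nra].
Qed.

Lemma poincare_endpoint (f df : R -> R) L : 0 < L ->
  (forall x, is_derive f x (df x)) -> (forall x, continuous df x) ->
  RInt (fun x => f x ^ 2) 0 L <= 2 * L * f L ^ 2 + 2 * L ^ 2 * RInt (fun x => df x ^ 2) 0 L.
Proof.
intros hL hd hc.
assert (cf : forall x, continuous f x)
  by (intros x; apply (ex_derive_continuous (V := R_NormedModule)); eexists; apply hd).
assert (cdf2 : forall x y, ex_RInt (fun y => df y ^ 2) x y)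
  by (intros; apply ex_RInt_cont; intros; apply continuous_pow2, hc).
set (J := RInt (fun x => df x ^ 2) 0 L).
assert (pw : forall x, 0 <= x <= L -> f x ^ 2 <= 2 * f L ^ 2 + 2 * L * J).
{ intros x hx.
  assert (hftc : RInt df x L = f L - f x).
  { apply is_RInt_unique, (is_RInt_derive (V := R_CompleteNormedModule)); intros; [apply hd | apply hc]. }
  assert (cs := RInt_sqr_le df x L (proj2 hx) hc). rewrite hftc in cs.
  assert (hJ : RInt (fun y => df y ^ 2) 0 x + RInt (fun y => df y ^ 2) x L = J)
    by (apply (RInt_Chasles (V := R_CompleteNormedModule)); apply cdf2).
  assert (0 <= RInt (fun y => df y ^ 2) 0 x)
    by (apply RInt_ge_0; [lra | apply cdf2 | intros; apply pow2_ge_0]).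
  assert (0 <= RInt (fun y => df y ^ 2) x L)
    by (apply RInt_ge_0; [lra | apply cdf2 | intros; apply pow2_ge_0]).
  assert ((L - x) * RInt (fun y => df y ^ 2) x L <= L * J) by (apply Rmult_le_compat; lra).
  pose proof (pow2_ge_0 (2 * f L - f x)). nra. }
apply Rle_trans with (RInt (fun _ => 2 * f L ^ 2 + 2 * L * J) 0 L).
- apply RInt_le; [lra | apply ex_RInt_cont; intros; apply continuous_pow2, cf | apply ex_RInt_const |].
  intros x hx; apply pw; lra.
- rewrite RInt_const. unfold scal; simpl; unfold mult; simpl. fold J. nra.
Qed.

Lemma is_derive_RInt_upper (f : R -> R) a x : (forall y, continuous f y) ->
  is_derive (fun y => RInt f a y) x (f x).
Proof.
intros H. apply (is_derive_RInt (V := R_CompleteNormedModule) f (fun y => RInt f a y) a x); [|apply H].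
exists (mkposreal 1 Rlt_0_1). intros y _.
apply (RInt_correct (V := R_CompleteNormedModule)), ex_RInt_cont, H.
Qed.

Lemma is_derive_RInt_window (f : R -> R) h t : (forall s, continuous f s) ->
  is_derive (fun t => RInt f (t - h) t) t (f t - f (t - h)).
Proof.
intros hc.
apply (is_derive_ext (fun t => RInt f 0 t - RInt f 0 (t - h))).
{ intros s.
  rewrite <- (RInt_Chasles (V := R_CompleteNormedModule) f 0 (s - h) s) by apply ex_RInt_cont, hc.
  unfold plus; simpl. ring. }
apply (is_derive_minus (V := R_NormedModule)); [apply is_derive_RInt_upper, hc|].
replace (f (t - h)) with (scal 1 (f (t - h))) by (unfold scal; simpl; unfold mult; simpl; ring).
apply (is_derive_comp (fun y => RInt f 0 y) (fun y => y - h) t (f (t - h)) 1).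
- apply is_derive_RInt_upper, hc.
- auto_derive; [exact I | ring].
Qed.

Lemma nonincreasing_of_derive_nonpos (q dq : R -> R) a b :
  a <= b -> (forall s, is_derive q s (dq s)) -> (forall s, a < s < b -> dq s <= 0) -> q b <= q a.
Proof.
intros [hab|<-] hd hneg; [|lra].
destruct (MVT_cor2 q dq a b hab) as [c [hc hac]].
- intros c _. apply is_derive_Reals, hd.
- assert (dq c <= 0) by (apply hneg; exact hac). nra.
Qed.

Lemma window_difference_le (f df h : R -> R) mu C Tp T t :
  (forall s, is_derive f s (df s)) -> (forall s, continuous h s) ->
  (forall s, 0 < s < T -> df s <= - mu * f s + C * h s) ->
  0 < Tp -> Tp <= t <= T ->
  f t - f (t - Tp) <= - mu * RInt f (t - Tp) t + C * RInt h (t - Tp) t.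
Proof.
intros hd hh hdf hTp ht.
assert (cf : forall s, continuous f s)
  by (intros s; apply (ex_derive_continuous (V := R_NormedModule)); eexists; apply hd).
set (q := fun s => f s + mu * RInt f (t - Tp) s - C * RInt h (t - Tp) s).
assert (hq : q t <= q (t - Tp)).
{ apply (nonincreasing_of_derive_nonpos q (fun s => df s + mu * f s - C * h s)); [lra| |].
  - intros s.
    apply (is_derive_minus (V := R_NormedModule)); [apply (is_derive_plus (V := R_NormedModule))|];
      [apply hd | apply is_derive_scal ..]; apply is_derive_RInt_upper; assumption.
  - intros s hs. assert (hs' := hdf s ltac:(lra)). lra. }
unfold q in hq. rewrite !RInt_point in hq. unfold zero in hq; simpl in hq. lra.
Qed.

Lemma gronwall_exp_forcing (E dE : R -> R) mu Cg nu Tp T :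
  (forall t, is_derive E t (dE t)) ->
  (forall t, Tp < t < T -> dE t <= - mu * E t + Cg * exp (- nu * t)) ->
  0 < mu < nu -> 0 <= Cg -> 0 < Tp ->
  forall t, Tp <= t <= T -> E t <= exp (- mu * (t - Tp)) * (E Tp + Cg / (nu - mu)).
Proof.
intros hd hE hmu hCg hTp t ht.
set (d := nu - mu).
assert (hdp : 0 < d) by (unfold d; lra).
set (p := fun s => exp (mu * s) * E s + Cg / d * exp (- d * s)).
assert (hp : p t <= p Tp).
{ apply (nonincreasing_of_derive_nonpos p
    (fun s => exp (mu * s) * (mu * E s + dE s) - Cg * exp (- d * s))); [lra| |].
  - intros s. unfold p. auto_derive; [eexists; apply hd|].
    replace (Derive (fun x : R => E x) s) with (dE s) by (symmetry; apply is_derive_unique, hd).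
    field. lra.
  - intros s hs.
    assert (exp (mu * s) * (mu * E s + dE s) <= exp (mu * s) * (Cg * exp (- nu * s)))
      by (apply Rmult_le_compat_l; [apply Rlt_le, exp_pos | specialize (hE s ltac:(lra)); lra]).
    assert (he : exp (mu * s) * exp (- nu * s) = exp (- d * s))
      by (rewrite <- exp_plus; unfold d; f_equal; ring).
    replace (exp (mu * s) * (Cg * exp (- nu * s))) with (Cg * exp (- d * s)) in H
      by (rewrite <- he; ring).
    lra. }
assert (hCd : 0 <= Cg / d) by (apply Rdiv_le_0_compat; lra).
assert (Cg / d * exp (- d * Tp) <= Cg / d * exp (mu * Tp))
  by (apply Rmult_le_compat_l; [exact hCd | apply Rlt_le, exp_increasing; nra]).
assert (0 <= Cg / d * exp (- d * t)) by (apply Rmult_le_pos; [exact hCd | apply Rlt_le, exp_pos]).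
apply Rmult_le_reg_l with (exp (mu * t)); [apply exp_pos|].
rewrite <- Rmult_assoc, <- exp_plus. replace (mu * t + - mu * (t - Tp)) with (mu * Tp) by ring.
unfold p in hp. fold d. nra.
Qed.

Lemma windowed_energy_decay (f df h : R -> R) mu C nu Cnu Tp T :
  (forall s, is_derive f s (df s)) -> (forall s, continuous h s) ->
  (forall s, 0 < s < T -> df s <= - mu * f s + C * h s) ->
  (forall t, Tp < t < T -> RInt h (t - Tp) t <= Cnu * exp (- nu * t)) ->
  0 < mu < nu -> 0 <= C -> 0 <= Cnu -> 0 < Tp ->
  forall t, Tp <= t <= T ->
  RInt f (t - Tp) t <= exp (- mu * (t - Tp)) * (RInt f (Tp - Tp) Tp + C * Cnu / (nu - mu)).
Proof.
intros hd hh hdf hwin hmu hC hCnu hTp.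
assert (cf : forall s, continuous f s)
  by (intros s; apply (ex_derive_continuous (V := R_NormedModule)); eexists; apply hd).
apply (gronwall_exp_forcing (fun t => RInt f (t - Tp) t) (fun t => f t - f (t - Tp))); try lra.
- intros t. apply is_derive_RInt_window, cf.
- intros t ht.
  assert (hw := window_difference_le f df h mu C Tp T t hd hh hdf hTp ltac:(lra)).
  assert (C * RInt h (t - Tp) t <= C * (Cnu * exp (- nu * t)))
    by (apply Rmult_le_compat_l; [exact hC | apply hwin, ht]).
  lra.
- apply Rmult_le_pos; assumption.
Qed.

(** * The energy identity along solutions *)

(* The t-derivative of [density] when w_t = Q, P_t = Pt, Q_t = Qt, and the x-derivative of
   [flux] when w_x = s + P, P_x = Px, Q_x = Qx, eps_x = - eps / L. *)
Definition density_dt (a k eps w P Q Pt Qt : R) : R :=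
  k * (- 2 * w * Q * P ^ 2 + 2 * (a ^ 2 - w ^ 2) * P * Pt + 2 * Q * Qt)
  - 2 * eps * (Q * P ^ 2 + 2 * w * P * Pt + Qt * P + Q * Pt).

Definition flux_dx (a k L eps w s P Q Px Qx : R) : R :=
  2 * k * (- 2 * w * (s + P) * P * Q + (a ^ 2 - w ^ 2) * Px * Q + (a ^ 2 - w ^ 2) * P * Qx)
  - 2 * k * ((s + P) * Q ^ 2 + 2 * w * Q * Qx)
  + eps / L * ((a ^ 2 - w ^ 2) * P ^ 2 + Q ^ 2)
  - eps * (- 2 * w * (s + P) * P ^ 2 + 2 * (a ^ 2 - w ^ 2) * P * Px + 2 * Q * Qx).

Lemma density_dt_sub_flux_dx a k L eps w s P Q Px Qx F :
  density_dt a k eps w P Q Qx (F - 2 * w * Qx + (a ^ 2 - w ^ 2) * Px)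
  - flux_dx a k L eps w s P Q Px Qx = remainder a k L eps w s P Q F.
Proof. unfold density_dt, flux_dx, remainder, cubic_terms. ring. Qed.

Lemma continuity_2d_pt_pow f n t x :
  continuity_2d_pt f t x -> continuity_2d_pt (fun s y => f s y ^ n) t x.
Proof.
intros H. induction n as [|n IH]; simpl;
  [apply continuity_2d_pt_const | apply continuity_2d_pt_mult; assumption].
Qed.

Lemma continuity_2d_pt_of_space (g : R -> R) t x :
  continuous g x -> continuity_2d_pt (fun _ y => g y) t x.
Proof.
intros H. apply (continuity_1d_2d_pt_comp g (fun _ y => y));
  [apply continuity_pt_filterlim, H | apply continuity_2d_pt_id2].
Qed.

Lemma continuous_of_continuity_2d_pt f t x :
  continuity_2d_pt f t x -> continuous (fun y => f t y) x.
Proof.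
intros H. apply continuity_2d_pt_filterlim in H.
apply (continuous_comp_2 (fun _ => t) (fun y => y) f);
  [apply continuous_const | apply continuous_id | exact H].
Qed.

Lemma ex_RInt_2d (g : R -> R -> R) t a b : (forall x, continuity_2d_pt g t x) ->
  ex_RInt (fun x => g t x) a b.
Proof.
intros hg. apply (ex_RInt_continuous (V := R_CompleteNormedModule)). intros.
apply continuous_of_continuity_2d_pt, hg.
Qed.

Lemma is_derive_RInt_2d (g dg : R -> R -> R) a b t :
  (forall s x, is_derive (fun s => g s x) s (dg s x)) ->
  (forall s x, continuity_2d_pt g s x) -> (forall s x, continuity_2d_pt dg s x) ->
  is_derive (fun s => RInt (fun x => g s x) a b) t (RInt (fun x => dg t x) a b).
Proof.
intros hd hg hdg.
replace (RInt (fun x => dg t x) a b) with (RInt (fun x => Derive (fun s => g s x) t) a b)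
  by (apply RInt_ext; intros; apply is_derive_unique, hd).
apply (is_derive_RInt_param (fun s x => g s x)).
- exists (mkposreal 1 Rlt_0_1). intros; eexists; apply hd.
- intros x _. apply (continuity_2d_pt_ext dg); [|apply hdg].
  intros s y. symmetry. apply is_derive_unique, hd.
- exists (mkposreal 1 Rlt_0_1). intros; apply ex_RInt_2d, hg.
Qed.

Ltac continuity_2d :=
  repeat first
  [ assumption
  | apply continuity_2d_pt_plus | apply continuity_2d_pt_minus
  | apply continuity_2d_pt_mult | apply continuity_2d_pt_opp
  | apply continuity_2d_pt_pow | apply continuity_2d_pt_const ].

Lemma exp_le_compat x y : x <= y -> exp x <= exp y.
Proof. intros [h|h]; [apply Rlt_le, exp_increasing, h | rewrite h; apply Rle_refl]. Qed.

Lemma exp_weight_bounds L x : 0 < L -> 0 <= x <= L -> / exp 1 <= exp (- (x / L)) <= 1.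
Proof.
intros hL hx.
assert (0 <= x / L <= 1).
{ split; [apply Rdiv_le_0_compat; lra|].
  apply Rmult_le_reg_r with L; [lra|]. unfold Rdiv. rewrite Rmult_assoc, Rinv_l; lra. }
rewrite <- exp_Ropp. split; [apply exp_le_compat; lra|].
rewrite <- exp_0. apply exp_le_compat; lra.
Qed.

Definition boundary_const (a k L : R) : R :=
  4 / 3 * exp 1 * a ^ 2 * k ^ 2 + 1 / (2 * exp 1 * energy_H1_const a k L * k).

Section Energy_calculus.

Variables (a k L : R) (ubar : R -> R) (u : R -> R -> R).
Hypothesis huC2 : C2_2d u.
Hypothesis hubC1 : C1_1d ubar.
Hypothesis hL : 0 < L.

Lemma C2_2d_continuity t x :
  continuity_2d_pt u t x /\ continuity_2d_pt (pt u) t x /\ continuity_2d_pt (px u) t x /\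
  continuity_2d_pt (pt (pt u)) t x /\ continuity_2d_pt (px (pt u)) t x /\
  continuity_2d_pt (pt (px u)) t x /\ continuity_2d_pt (px (px u)) t x.
Proof.
destruct (huC2 t x) as (_&_&_&_&_&_&c1&c2&c3&c4&c5&c6&c7).
repeat split; apply continuity_2d_pt_filterlim; assumption.
Qed.

Lemma pt_px_comm t x : pt (px u) t x = px (pt u) t x.
Proof.
apply (Schwarz u t x).
- exists (mkposreal 1 Rlt_0_1). intros s y _ _.
  destruct (huC2 s y) as (h1&h2&h3&h4&h5&h6&_). unfold pt, px in *. tauto.
- apply C2_2d_continuity.
- apply C2_2d_continuity.
Qed.

Definition energy_density t x :=
  density a k (exp (- (x / L))) (ubar x + u t x) (px u t x) (pt u t x).

Definition energy_density_dt t x :=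
  density_dt a k (exp (- (x / L))) (ubar x + u t x) (px u t x) (pt u t x)
    (pt (px u) t x) (pt (pt u) t x).

Definition energy_flux t x :=
  flux a k (exp (- (x / L))) (ubar x + u t x) (px u t x) (pt u t x).

Definition energy_flux_dx t x :=
  flux_dx a k L (exp (- (x / L))) (ubar x + u t x) (Derive ubar x) (px u t x) (pt u t x)
    (px (px u) t x) (px (pt u) t x).

Lemma energy_density_is_derive t x :
  is_derive (fun s => energy_density s x) t (energy_density_dt t x).
Proof.
destruct (huC2 t x) as (h1&h2&h3&h4&h5&h6&_).
unfold energy_density, energy_density_dt, density, density_dt. auto_derive; [tauto|].
unfold pt, px. ring.
Qed.

Lemma energy_flux_is_derive t x :
  is_derive (fun y => energy_flux t y) x (energy_flux_dx t x).
Proof.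
destruct (huC2 t x) as (h1&h2&h3&h4&h5&h6&_). destruct (hubC1 x) as [hub _].
unfold energy_flux, energy_flux_dx, flux, flux_dx. auto_derive; [tauto|].
unfold pt, px, Rdiv. change (fun y => ubar y) with ubar. field. lra.
Qed.

Lemma energy_continuity t x :
  continuity_2d_pt energy_density t x /\ continuity_2d_pt energy_density_dt t x /\
  continuity_2d_pt energy_flux_dx t x.
Proof.
destruct (C2_2d_continuity t x) as (c1&c2&c3&c4&c5&c6&c7).
assert (cb : continuity_2d_pt (fun _ y => ubar y) t x)
  by (apply continuity_2d_pt_of_space, (ex_derive_continuous (V := R_NormedModule)), hubC1).
assert (cs : continuity_2d_pt (fun _ y => Derive ubar y) t x)
  by (apply continuity_2d_pt_of_space, hubC1).
assert (ce : continuity_2d_pt (fun _ y => exp (- (y / L))) t x).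
{ apply (continuity_2d_pt_of_space (fun y => exp (- (y / L)))).
  apply (ex_derive_continuous (V := R_NormedModule)). auto_derive. lra. }
unfold energy_density, energy_density_dt, energy_flux_dx, density, density_dt, flux_dx.
repeat split; continuity_2d.
Qed.

Lemma is_RInt_sqr_2d (f : R -> R -> R) t : (forall x, continuity_2d_pt f t x) ->
  is_RInt (fun x => f t x ^ 2) 0 L (RInt (fun x => f t x ^ 2) 0 L).
Proof.
intros hf. apply (RInt_correct (V := R_CompleteNormedModule)), (ex_RInt_2d (fun s y => f s y ^ 2)).
intros; apply continuity_2d_pt_pow, hf.
Qed.

Lemma energy_is_derive t : is_derive (E1 a k L ubar u) t (RInt (fun x => energy_density_dt t x) 0 L).
Proof.
apply (is_derive_RInt_2d energy_density energy_density_dt);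
  [apply energy_density_is_derive | apply energy_continuity ..].
Qed.

Lemma energy_balance theta t x :
  pt (pt u) t x + 2 * (ubar x + u t x) * px (pt u) t x
    - (a ^ 2 - (ubar x + u t x) ^ 2) * px (px u) t x
  = source theta a (ubar x) (Derive ubar x) (u t x) (px u t x) (pt u t x) ->
  energy_density_dt t x - energy_flux_dx t x
  = remainder a k L (exp (- (x / L))) (ubar x + u t x) (Derive ubar x) (px u t x) (pt u t x)
      (source theta a (ubar x) (Derive ubar x) (u t x) (px u t x) (pt u t x)).
Proof.
intros hpde. unfold energy_density_dt, energy_flux_dx. rewrite pt_px_comm.
replace (pt (pt u) t x) with
  (source theta a (ubar x) (Derive ubar x) (u t x) (px u t x) (pt u t x)
   - 2 * (ubar x + u t x) * px (pt u) t x + (a ^ 2 - (ubar x + u t x) ^ 2) * px (px u) t x) by lra.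
apply density_dt_sub_flux_dx.
Qed.

Lemma energy_derivative_le mu c t :
  (forall x, 0 <= x <= L -> energy_density_dt t x - energy_flux_dx t x
     <= - mu * energy_density t x + c * (u t x ^ 2 - 2 * L ^ 2 * px u t x ^ 2)) ->
  RInt (fun x => energy_density_dt t x) 0 L
  <= energy_flux t L - energy_flux t 0 - mu * E1 a k L ubar u t
     + c * (RInt (fun x => u t x ^ 2) 0 L - 2 * L ^ 2 * RInt (fun x => px u t x ^ 2) 0 L).
Proof.
intros hpt.
set (Iu := RInt (fun x => u t x ^ 2) 0 L). set (IP := RInt (fun x => px u t x ^ 2) 0 L).
assert (hflux : is_RInt (fun x => energy_flux_dx t x) 0 L (energy_flux t L - energy_flux t 0)).
{ apply (is_RInt_derive (V := R_CompleteNormedModule) (fun y => energy_flux t y)); intros x _;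
    [apply energy_flux_is_derive | apply continuous_of_continuity_2d_pt, energy_continuity]. }
assert (henergy : is_RInt (fun x => - mu * energy_density t x) 0 L (- mu * E1 a k L ubar u t)).
{ apply (is_RInt_scal (V := R_NormedModule)), (RInt_correct (V := R_CompleteNormedModule)).
  apply ex_RInt_2d. intros; apply energy_continuity. }
assert (hquad : is_RInt (fun x => c * (u t x ^ 2 - 2 * L ^ 2 * px u t x ^ 2)) 0 L
                  (c * (Iu - 2 * L ^ 2 * IP))).
{ apply (is_RInt_scal (V := R_NormedModule)), (is_RInt_minus (V := R_NormedModule));
    [|apply (is_RInt_scal (V := R_NormedModule))]; apply is_RInt_sqr_2d; apply C2_2d_continuity. }
apply Rle_trans with ((energy_flux t L - energy_flux t 0) + (- mu * E1 a k L ubar u t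
                        + c * (Iu - 2 * L ^ 2 * IP))); [|lra].
refine (is_RInt_le (fun x => energy_density_dt t x) _ 0 L _ _ (Rlt_le _ _ hL) _
  (is_RInt_plus (V := R_NormedModule) _ _ _ _ _ _ hflux
    (is_RInt_plus (V := R_NormedModule) _ _ _ _ _ _ henergy hquad)) _).
- apply (RInt_correct (V := R_CompleteNormedModule)), ex_RInt_2d. intros; apply energy_continuity.
- intros x hx. assert (hx' := hpt x ltac:(lra)). unfold plus; simpl in *. lra.
Qed.

Lemma u_poincare t :
  RInt (fun x => u t x ^ 2) 0 L <= 2 * L * u t L ^ 2 + 2 * L ^ 2 * RInt (fun x => px u t x ^ 2) 0 L.
Proof.
apply (poincare_endpoint (fun y => u t y) (fun y => px u t y) L hL).
- intros x. apply Derive_correct, (huC2 t x).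
- intros x. apply continuous_of_continuity_2d_pt, C2_2d_continuity.
Qed.

Definition H1_density t x := u t x ^ 2 + pt u t x ^ 2 + px u t x ^ 2.

Lemma H1_density_integral_continuous t : continuous (fun s => RInt (fun x => H1_density s x) 0 L) t.
Proof.
apply (ex_derive_continuous (V := R_NormedModule)). eexists.
apply (is_derive_RInt_2d H1_density
  (fun s x => 2 * u s x * pt u s x + 2 * pt u s x * pt (pt u) s x + 2 * px u s x * pt (px u) s x)).
- intros s x. destruct (huC2 s x) as (h1&h2&h3&h4&h5&h6&_).
  unfold H1_density. auto_derive; [tauto|]. unfold pt, px. ring.
- intros s x. destruct (C2_2d_continuity s x) as (c1&c2&c3&_). unfold H1_density. continuity_2d.
- intros s x. destruct (C2_2d_continuity s x) as (c1&c2&c3&c4&c5&c6&c7). continuity_2d.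
Qed.

Lemma H1_density_le_energy t :
  0 < a -> 0 <= k -> 0 < coercivity a k ->
  (forall x, 0 <= x <= L -> Rabs (ubar x + u t x) <= a / 2) -> u t L = 0 ->
  RInt (fun x => H1_density t x) 0 L <= energy_H1_const a k L * E1 a k L ubar u t.
Proof.
intros ha hk hM hw huL.
set (Iu := RInt (fun x => u t x ^ 2) 0 L).
set (IP := RInt (fun x => px u t x ^ 2) 0 L).
set (IQ := RInt (fun x => pt u t x ^ 2) 0 L).
assert (hIu : is_RInt (fun x => u t x ^ 2) 0 L Iu) by (apply is_RInt_sqr_2d; apply C2_2d_continuity).
assert (hIP : is_RInt (fun x => px u t x ^ 2) 0 L IP) by (apply is_RInt_sqr_2d; apply C2_2d_continuity).
assert (hIQ : is_RInt (fun x => pt u t x ^ 2) 0 L IQ) by (apply is_RInt_sqr_2d; apply C2_2d_continuity).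
assert (hcoer : coercivity a k * (IP + IQ) <= E1 a k L ubar u t).
{ refine (is_RInt_le (fun x => coercivity a k * (px u t x ^ 2 + pt u t x ^ 2)) (energy_density t) 0 L _ _
    (Rlt_le _ _ hL) _ _ _).
  - apply (is_RInt_scal (V := R_NormedModule)), (is_RInt_plus (V := R_NormedModule)); assumption.
  - apply (RInt_correct (V := R_CompleteNormedModule)), ex_RInt_2d. intros; apply energy_continuity.
  - intros x hx. apply density_ge; [exact ha | exact hk | | apply hw; lra].
    pose proof (exp_weight_bounds L x hL ltac:(lra)). pose proof (Rinv_0_lt_compat _ (exp_pos 1)). lra. }
assert (hpoinc := u_poincare t). rewrite huL in hpoinc. fold Iu IP in hpoinc.
assert (0 <= IP) by (apply RInt_ge_0; [lra | eexists; exact hIP | intros; apply pow2_ge_0]).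
assert (0 <= IQ) by (apply RInt_ge_0; [lra | eexists; exact hIQ | intros; apply pow2_ge_0]).
unfold H1_density. rewrite (is_RInt_unique _ _ _ (Iu + IQ + IP)) by
  (apply (is_RInt_plus (V := R_NormedModule)); [apply (is_RInt_plus (V := R_NormedModule))|]; assumption).
unfold energy_H1_const.
apply Rle_trans with ((1 + 2 * L ^ 2) * (IP + IQ)); [simpl in hpoinc; nra|].
unfold Rdiv. rewrite Rmult_assoc. apply Rmult_le_compat_l; [nra|].
apply Rmult_le_reg_l with (coercivity a k); [exact hM|].
rewrite <- Rmult_assoc, Rinv_r, Rmult_1_l by lra. exact hcoer.
Qed.

Section Dissipation.

Variables (theta lambda T : R) (b : R -> R).
Hypothesis ha : 0 < a.
Hypothesis htheta : 0 <= theta.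
Hypothesis hlam : 1 / 2 < lambda < 1.
Hypothesis hk : 1 <= k.
Hypothesis hka : 1 <= k * (lambda * a).
Hypothesis hM : 0 < coercivity a k.
Hypothesis hub_small : forall x, 0 <= x <= L ->
  0 < ubar x <= small_const a theta L k /\ ubar x <= (1 - lambda) * (a / 2) /\
  ubar x <= 1 / (4 * k * exp 1) /\ Rabs (Derive ubar x) <= small_const a theta L k.
Hypothesis hu_small : forall t x, 0 <= t <= T -> 0 <= x <= L ->
  Rabs (u t x) <= small_const a theta L k /\ Rabs (u t x) <= (1 - lambda) * (a / 2) /\
  Rabs (u t x) <= 1 / (4 * k * exp 1) /\
  Rabs (px u t x) <= small_const a theta L k /\ Rabs (pt u t x) <= small_const a theta L k.
Hypothesis hpde : forall t x, 0 <= t <= T -> 0 <= x <= L ->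
  pt (pt u) t x + 2 * (ubar x + u t x) * px (pt u) t x
    - (a ^ 2 - (ubar x + u t x) ^ 2) * px (px u) t x
  = source theta a (ubar x) (Derive ubar x) (u t x) (px u t x) (pt u t x).
Hypothesis hbc : forall t, 0 <= t <= T -> px u t 0 = k * pt u t 0 /\ u t L = b t.

Lemma total_velocity_le t x : 0 <= t <= T -> 0 <= x <= L ->
  Rabs (ubar x + u t x) <= (1 - lambda) * a.
Proof.
intros ht hx. destruct (hub_small x hx) as (h1&h2&_). destruct (hu_small t x ht hx) as (_&h3&_).
replace ((1 - lambda) * a) with ((1 - lambda) * (a / 2) + (1 - lambda) * (a / 2)) by field.
apply Rabs_plus_le; [rewrite Rabs_pos_eq|]; lra.
Qed.

Lemma energy_remainder_le t x : 0 <= t <= T -> 0 <= x <= L ->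
  energy_density_dt t x - energy_flux_dx t x
  <= - decay_rate L k * energy_density t x
     + decay_rate L k / energy_H1_const a k L * (u t x ^ 2 - 2 * L ^ 2 * px u t x ^ 2).
Proof.
intros ht hx.
destruct (hub_small x hx) as (h1&h2&_&h4). destruct (hu_small t x ht hx) as (h5&_&_&h8&h9).
assert (hw := total_velocity_le t x ht hx).
assert ((1 - lambda) * a <= a / 2) by nra.
rewrite (energy_balance theta t x (hpde t x ht hx)).
apply remainder_le; try assumption; try lra.
apply exp_weight_bounds; assumption.
Qed.

Lemma energy_flux_inflow_nonneg t : 0 <= t <= T -> 0 <= energy_flux t 0.
Proof.
intros ht. unfold energy_flux.
replace (exp (- (0 / L))) with 1 by (unfold Rdiv; rewrite Rmult_0_l, Ropp_0, exp_0; reflexivity).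
rewrite (proj1 (hbc t ht)).
apply (flux_inflow_nonneg a k lambda); try lra.
apply total_velocity_le; lra.
Qed.

Lemma energy_flux_outflow_le t : 0 < t < T -> energy_flux t L <= exp 1 * (k * a * Derive b t) ^ 2.
Proof.
intros ht.
assert (hbt : pt u t L = Derive b t).
{ apply Derive_ext_loc. apply (filter_imp (fun s => 0 < s < T)).
  - intros s hs. apply hbc. lra.
  - apply (open_and _ _ (open_gt 0) (open_lt T)). exact ht. }
assert (hLL : 0 <= L <= L) by lra.
destruct (hub_small L hLL) as (h1&_&h3&_). destruct (hu_small t L ltac:(lra) hLL) as (_&_&h7&_).
assert (hw := total_velocity_le t L ltac:(lra) hLL).
unfold energy_flux. rewrite <- hbt.
replace (exp (- (L / L))) with (/ exp 1) by (rewrite <- exp_Ropp; f_equal; field; lra).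
apply flux_outflow_le; [lra | |].
- assert ((1 - lambda) * a <= a) by nra. lra.
- pose proof (exp_pos 1).
  replace (/ exp 1) with (2 * k * (1 / (4 * k * exp 1) + 1 / (4 * k * exp 1))) by (field; lra).
  apply Rmult_le_compat_l; [lra|]. apply Rabs_plus_le; [rewrite Rabs_pos_eq|]; lra.
Qed.

Lemma energy_dissipation t : 0 < t < T ->
  RInt (fun x => energy_density_dt t x) 0 L
  <= - decay_rate L k * E1 a k L ubar u t + boundary_const a k L * (b t ^ 2 + Derive b t ^ 2).
Proof.
intros ht.
set (mu := decay_rate L k). set (K1 := energy_H1_const a k L).
assert (hK1 : 0 < K1) by (apply Rdiv_lt_0_compat; nra).
assert (hc : 0 < mu / K1) by (apply Rdiv_lt_0_compat; [apply decay_rate_pos |]; lra).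
assert (hc2L : mu / K1 * (2 * L) = 1 / (2 * exp 1 * K1 * k))
  by (unfold mu, decay_rate; field; pose proof (exp_pos 1); repeat split; lra).
assert (hder := energy_derivative_le mu (mu / K1) t
  (fun x hx => energy_remainder_le t x ltac:(lra) hx)).
assert (hpoinc := u_poincare t). rewrite (proj2 (hbc t ltac:(lra))) in hpoinc.
assert (hin := energy_flux_inflow_nonneg t ltac:(lra)).
assert (hout := energy_flux_outflow_le t ht).
assert (exp 1 * (k * a * Derive b t) ^ 2 <= 4 / 3 * exp 1 * a ^ 2 * k ^ 2 * Derive b t ^ 2)
  by (pose proof (exp_pos 1); pose proof (pow2_ge_0 (k * a * Derive b t)); nra).
assert (mu / K1 * RInt (fun x => u t x ^ 2) 0 L
        <= mu / K1 * (2 * L * b t ^ 2 + 2 * L ^ 2 * RInt (fun x => px u t x ^ 2) 0 L))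
  by (apply Rmult_le_compat_l; lra).
assert (hc2 : 0 < 1 / (2 * exp 1 * K1 * k))
  by (rewrite <- hc2L; apply Rmult_lt_0_compat; lra).
assert (0 <= 4 / 3 * exp 1 * a ^ 2 * k ^ 2 * b t ^ 2)
  by (pose proof (exp_pos 1); pose proof (pow2_ge_0 (a * k * b t)); nra).
assert (0 <= 1 / (2 * exp 1 * K1 * k) * Derive b t ^ 2)
  by (apply Rmult_le_pos; [lra | apply pow2_ge_0]).
assert (mu / K1 * (2 * L) * b t ^ 2 = 1 / (2 * exp 1 * K1 * k) * b t ^ 2) by (rewrite hc2L; ring).
unfold boundary_const. fold K1.
lra.
Qed.

Lemma H1_norm_le_energy Tp : 0 <= Tp <= T -> (forall t, T - Tp <= t <= T -> b t = 0) ->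
  H1sq u (T - Tp) T L <= energy_H1_const a k L * Eint a k L Tp ubar u T.
Proof.
intros hTp hb0.
assert (cE : forall t, continuous (E1 a k L ubar u) t)
  by (intros t; apply (ex_derive_continuous (V := R_NormedModule)); eexists; apply energy_is_derive).
apply Rle_trans with (RInt (fun t => energy_H1_const a k L * E1 a k L ubar u t) (T - Tp) T).
2: { right. apply is_RInt_unique, (is_RInt_scal (V := R_NormedModule)).
     apply (RInt_correct (V := R_CompleteNormedModule)), ex_RInt_cont, cE. }
apply RInt_le; [lra | apply ex_RInt_cont, H1_density_integral_continuous | |].
- apply ex_RInt_cont. intros t.
  apply (continuous_mult (K := R_AbsRing) (fun _ => energy_H1_const a k L) (E1 a k L ubar u));
    [apply continuous_const | apply cE].
- intros t ht. apply H1_density_le_energy; [lra | lra | exact hM | | ].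
  + intros x hx. assert (hw := total_velocity_le t x ltac:(lra) hx). nra.
  + rewrite (proj2 (hbc t ltac:(lra))). apply hb0. lra.
Qed.

End Dissipation.

End Energy_calculus.

Lemma feedback_gain_bounds a lambda k : 0 < a -> 1 / 2 < lambda < 1 ->
  k >= Rmax 1 (Rmax (4 / 3 * (1 / a + 1 / a ^ 2)) (1 / (lambda * a))) ->
  1 <= k /\ 1 <= k * (lambda * a) /\ 0 <= coercivity a k.
Proof.
intros ha hlam hk. apply Rge_le in hk.
assert (hk1 : 1 <= k) by (eapply Rle_trans; [apply Rmax_l | exact hk]).
assert (hk2 : 4 / 3 * (1 / a + 1 / a ^ 2) <= k)
  by (eapply Rle_trans; [eapply Rle_trans; [apply Rmax_l | apply Rmax_r] | exact hk]).
assert (hk3 : 1 / (lambda * a) <= k)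
  by (eapply Rle_trans; [eapply Rle_trans; [apply Rmax_r | apply Rmax_r] | exact hk]).
split; [exact hk1|split].
- apply Rmult_le_compat_r with (r := lambda * a) in hk3; [|nra].
  replace (1 / (lambda * a) * (lambda * a)) with 1 in hk3 by (field; nra). exact hk3.
- apply Rmult_le_compat_r with (r := a ^ 2) in hk2; [|nra].
  replace (4 / 3 * (1 / a + 1 / a ^ 2) * a ^ 2) with (4 / 3 * (a + 1)) in hk2 by (field; lra).
  apply Rmin_glb; nra.
Qed.

(* If M1 = 0 then K1 = (1 + 2 L^2) / 0 = 0 by the convention / 0 = 0, so the smallness bound
   collapses to 0 and cannot dominate a positive quantity. *)
Lemma coercivity_pos_of_small a theta L k y :
  0 <= coercivity a k -> 0 < y -> y <= small_const a theta L k -> 0 < coercivity a k.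
Proof.
intros [hM|hM] hy hsmall; [exact hM|exfalso].
assert (small_const a theta L k <= 0); [|lra].
unfold small_const, energy_H1_const. rewrite <- hM.
unfold Rdiv. rewrite Rinv_0, !Rmult_0_r, Rinv_0, Rmult_0_r. apply Rmin_r.
Qed.

Lemma stationary_state_small a theta L lambda k ubar :
  0 < a -> 0 <= theta -> 0 < lambda < 1 ->
  (forall x, 0 <= x <= L -> ubar x > 0) ->
  (forall x, 0 <= x <= L ->
     Derive ubar x = theta / 2 * (Rabs (ubar x) * ubar x ^ 2) / (a ^ 2 - ubar x ^ 2)) ->
  (forall x, 0 <= x <= L ->
     ubar x <= Rmin 1 (Rmin (1 / (4 * k * exp 1)) (Rmin ((1 - lambda) * (a / 2))
                 (decay_rate L k / (error_const a theta k * energy_H1_const a k L))))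
     /\ Derive ubar x <= small_const a theta L k) ->
  forall x, 0 <= x <= L ->
  0 < ubar x <= small_const a theta L k /\ ubar x <= (1 - lambda) * (a / 2) /\
  ubar x <= 1 / (4 * k * exp 1) /\ Rabs (Derive ubar x) <= small_const a theta L k.
Proof.
intros ha ht hlam hpos hode hsmall x hx.
destruct (hsmall x hx) as [hub hs]. pose proof (hpos x hx).
assert (h1 : ubar x <= 1) by (eapply Rle_trans; [exact hub | apply Rmin_l]).
assert (h2 : ubar x <= 1 / (4 * k * exp 1))
  by (eapply Rle_trans; [exact hub | eapply Rle_trans; [apply Rmin_r | apply Rmin_l]]).
assert (h3 : ubar x <= (1 - lambda) * (a / 2))
  by (eapply Rle_trans; [exact hub | eapply Rle_trans; [apply Rmin_r|]];
      eapply Rle_trans; [apply Rmin_r | apply Rmin_l]).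
assert (h4 : ubar x <= decay_rate L k / (error_const a theta k * energy_H1_const a k L))
  by (eapply Rle_trans; [exact hub | eapply Rle_trans; [apply Rmin_r|]];
      eapply Rle_trans; [apply Rmin_r | apply Rmin_r]).
assert (hds : 0 <= Derive ubar x).
{ assert (ubar x < a) by nra. assert (0 < a ^ 2 - ubar x ^ 2) by nra.
  rewrite (hode x hx). apply Rmult_le_pos; [| apply Rlt_le, Rinv_0_lt_compat; lra].
  apply Rmult_le_pos; [lra|]. apply Rmult_le_pos; [apply Rabs_pos | apply pow2_ge_0]. }
repeat split; try lra.
- apply Rmin_glb; assumption.
- rewrite Rabs_pos_eq; assumption.
Qed.

Lemma solution_small a theta L lambda k (u : R -> R -> R) T y0 :
  (forall t x, 0 <= t <= T -> 0 <= x <= L ->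
     Rabs (u t x) <= Rmin y0 (Rmin ((1 - lambda) * (a / 2)) (1 / (4 * k * exp 1)))
     /\ Rmax (Rabs (u t x)) (Rmax (Rabs (px u t x)) (Rabs (pt u t x))) <= small_const a theta L k) ->
  forall t x, 0 <= t <= T -> 0 <= x <= L ->
  Rabs (u t x) <= small_const a theta L k /\ Rabs (u t x) <= (1 - lambda) * (a / 2) /\
  Rabs (u t x) <= 1 / (4 * k * exp 1) /\
  Rabs (px u t x) <= small_const a theta L k /\ Rabs (pt u t x) <= small_const a theta L k.
Proof.
intros hsmall t x ht hx. destruct (hsmall t x ht hx) as [h1 h2].
assert (hP : Rmax (Rabs (px u t x)) (Rabs (pt u t x)) <= small_const a theta L k)
  by (eapply Rle_trans; [apply Rmax_r | exact h2]).
assert (h3 : Rmin ((1 - lambda) * (a / 2)) (1 / (4 * k * exp 1)) >= Rabs (u t x))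
  by (apply Rle_ge; eapply Rle_trans; [exact h1 | apply Rmin_r]).
repeat split.
- eapply Rle_trans; [apply Rmax_l | exact h2].
- eapply Rle_trans; [apply Rge_le, h3 | apply Rmin_l].
- eapply Rle_trans; [apply Rge_le, h3 | apply Rmin_r].
- eapply Rle_trans; [apply Rmax_l | exact hP].
- eapply Rle_trans; [apply Rmax_r | exact hP].
Qed.

Lemma boundary_const_pos a k L : 0 < L -> 0 < k -> 0 < coercivity a k -> 0 < boundary_const a k L.
Proof.
intros hL hk hM. pose proof (exp_pos 1).
assert (0 < energy_H1_const a k L) by (apply Rdiv_lt_0_compat; nra).
assert (0 <= 4 / 3 * exp 1 * a ^ 2 * k ^ 2) by (pose proof (pow2_ge_0 (a * k)); nra).
assert (0 < 1 / (2 * exp 1 * energy_H1_const a k L * k))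
  by (apply Rdiv_lt_0_compat; [lra | apply Rmult_lt_0_compat; [apply Rmult_lt_0_compat|]; lra]).
unfold boundary_const. lra.
Qed.

Lemma boundary_data_continuous (b : R -> R) s : C2_1d b ->
  continuous (fun s => b s ^ 2 + Derive b s ^ 2) s.
Proof.
intros hb. destruct (hb s) as (h1 & h2 & _).
apply (continuous_plus (fun s => b s ^ 2) (fun s => Derive b s ^ 2));
  apply continuous_pow2, (ex_derive_continuous (V := R_NormedModule)); assumption.
Qed.

Theorem theorem2
  (a theta L lambda k : R)
  (ha : 0 < a) (htheta : 0 <= theta) (hL : 0 < L)
  (hlam : 1 / 2 < lambda < 1)
  (hk : k >= Rmax 1 (Rmax (4 / 3 * (1 / a + 1 / a ^ 2)) (1 / (lambda * a))))
  (ubar : R -> R) (hubC1 : C1_1d ubar)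
  (hubpos : forall x, 0 <= x <= L -> ubar x > 0)
  (hubode : forall x, 0 <= x <= L ->
     Derive ubar x = theta / 2 * (Rabs (ubar x) * (ubar x) ^ 2) / (a ^ 2 - (ubar x) ^ 2))
  (Tp T : R) (hTp : 0 < Tp) (hT : T > Tp)
  (b : R -> R) (hbC2 : C2_1d b)
  (u : R -> R -> R) (huC2 : C2_2d u)
  (nu Cnu : R) :
  let e := exp 1 in
  let mu := 1 / (4 * e * L * k) in
  let C0 := 12 * k + 4 * (k + 1) * (18 + 13 * theta + 1 / a ^ 2 * (8 + 6 * theta)) + 10 in
  let M1 := Rmin (3 / 4 * k * a ^ 2 - a - 1) (k - 1) in
  let K1 := (1 + 2 * L ^ 2) / M1 in
  (forall x, 0 <= x <= L ->
     ubar x <= Rmin 1 (Rmin (1 / (4 * k * e)) (Rmin ((1 - lambda) * (a / 2)) (mu / (C0 * K1))))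
     /\ Derive ubar x <= Rmin 1 (mu / (C0 * K1))) ->
  (* the PDE on [0,T] x [0,L] *)
  (forall t x, 0 <= t <= T -> 0 <= x <= L ->
     pt (pt u) t x + 2 * (ubar x + u t x) * px (pt u) t x
     - (a ^ 2 - (ubar x + u t x) ^ 2) * px (px u) t x
     = Ftilde theta (u t x + ubar x) (px u t x + Derive ubar x) (pt u t x)
       - (a ^ 2 - (ubar x + u t x) ^ 2) / (a ^ 2 - (ubar x) ^ 2)
         * Ftilde theta (ubar x) (Derive ubar x) 0) ->
  (* boundary conditions *)
  (forall t, 0 <= t <= T -> px u t 0 = k * pt u t 0 /\ u t L = b t) ->
  (* smallness of the solution *)
  (forall t x, 0 <= t <= T -> 0 <= x <= L ->
     Rabs (u t x) <= Rmin (ubar 0) (Rmin ((1 - lambda) * (a / 2)) (1 / (4 * k * e)))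
     /\ Rmax (Rabs (u t x)) (Rmax (Rabs (px u t x)) (Rabs (pt u t x)))
        <= Rmin 1 (mu / (C0 * K1))) ->
  (* decay of the boundary data *)
  nu > mu -> Cnu > 0 ->
  (forall t, Tp < t < T ->
     RInt (fun tau => (b tau) ^ 2 + (Derive b tau) ^ 2) (t - Tp) t
     <= Cnu * exp (- nu * t)) ->
  let delta := nu - mu in
  let Cg := (4 / 3 * e * a ^ 2 * k ^ 2 + 1 / (2 * e * K1 * k)) * Cnu in
  (forall t, Tp < t < T ->
     Eint a k L Tp ubar u t
     <= exp (- mu * (t - Tp)) * (Eint a k L Tp ubar u Tp + Cg / delta))
  /\
  ((forall t, T - Tp <= t <= T -> b t = 0) ->
     H1sq u (T - Tp) T L
     <= K1 * exp (- mu * (T - Tp)) * (Eint a k L Tp ubar u Tp + Cg / delta)).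
Proof.
intros e mu C0 M1 K1 Hub Hpde Hbc Hsm hnu hCnu Hb delta Cg.
destruct (feedback_gain_bounds a lambda k ha hlam hk) as (hk1 & hka & hM0).
assert (HUB := stationary_state_small a theta L lambda k ubar ha htheta ltac:(lra) hubpos hubode Hub).
assert (hM : 0 < coercivity a k)
  by (apply (coercivity_pos_of_small a theta L k (ubar 0) hM0); apply HUB; lra).
assert (HU := solution_small a theta L lambda k u T (ubar 0) Hsm).
assert (hdecay : forall t, Tp <= t <= T ->
          Eint a k L Tp ubar u t <= exp (- mu * (t - Tp)) * (Eint a k L Tp ubar u Tp + Cg / delta)).
{ apply (windowed_energy_decay (E1 a k L ubar u) (fun t => RInt (energy_density_dt a k L ubar u t) 0 L)
           (fun s => b s ^ 2 + Derive b s ^ 2)); try lra.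
  - apply energy_is_derive; assumption.
  - intros s. apply boundary_data_continuous, hbC2.
  - exact (energy_dissipation a k L ubar u huC2 hubC1 hL theta lambda T b
             ha htheta hlam hk1 hka hM HUB HU Hpde Hbc).
  - exact Hb.
  - split; [apply decay_rate_pos|]; lra.
  - apply Rlt_le, boundary_const_pos; [exact hL | lra | exact hM]. }
split; [intros t ht; apply hdecay; lra|].
intros hb0.
eapply Rle_trans.
{ apply (H1_norm_le_energy a k L ubar u huC2 hubC1 hL theta lambda T b ha hlam hk1 hM HUB HU Hbc Tp);
    [lra | exact hb0]. }
rewrite Rmult_assoc. apply Rmult_le_compat_l; [|apply hdecay; lra].
apply Rlt_le, Rdiv_lt_0_compat; [nra | exact hM].
Qed.
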